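(* Let $S$ be a topological semigroup having an open left unit or an open right unit. Then (1) $S$ is completely regular iff $S$ is regular iff $S$ is semiregular; (2) $S$ is functionally Hausdorff iff $S$ is Hausdorff iff $S$ is semi-Hausdorff.
   Context: A topological semigroup is a topological space with a continuous associative multiplication. $e\in S$ is a left unit if $ex=x$ for all $x$, a right unit if $xe=x$ for all $x$; a left unit $e$ is an open left unit if $Ux$ is a neighborhood of $x$ for every neighborhood $U$ of $e$ and every $x\in S$; a right unit $e$ is an open right unit if $xU$ is a neighborhood of $x$ for every neighborhood $U$ of $e$ and every $x$. Separation axioms (no $T_1$ assumed): regular: each neighborhood $O_x$ of $x$ contains $\overline{U_x}$ for some neighborhood $U_x$ of $x$; semiregular: each $O_x$ contains $\mathrm{int}\,\overline{U_x}$ for some neighborhood $U_x$; completely regular: for each $O_x$ there is continuous $f:S\to[0,1]$ with $f(x)=0$, $f^{-1}([0,1))\subset O_x$; Hausdorff: for distinct $x,y$ some neighborhood $U_x$ of $x$ has $y\notin\overline{U_x}$; semi-Hausdorff: for distinct $x,y$ some neighborhood $U_x$ has $y\notin\mathrm{int}\,\overline{U_x}$; functionally Hausdorff: distinct points are separated by a continuous function to $[0,1]$. *)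

From HB Require Import structures.
From mathcomp Require Import all_boot all_order all_algebra.
From mathcomp Require Import all_classical all_reals all_analysis.
From mathcomp Require Import Rstruct Rstruct_topology.

Set Implicit Arguments. Unset Strict Implicit. Unset Printing Implicit Defensive.
Import Order.TTheory GRing.Theory Num.Theory.
Local Open Scope classical_set_scope.
Local Open Scope ring_scope.

Definition is_topological_semigroup {S : topologicalType} (m : S -> S -> S) : Prop :=
  (forall x y z, m x (m y z) = m (m x y) z) /\
  continuous (fun p : S * S => m p.1 p.2).

Definition is_left_unit {S : Type} (m : S -> S -> S) (e : S) : Prop :=
  forall x, m e x = x.
Definition is_right_unit {S : Type} (m : S -> S -> S) (e : S) : Prop :=
  forall x, m x e = x.

Definition is_open_left_unit {S : topologicalType} (m : S -> S -> S) (e : S) : Prop :=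
  is_left_unit m e /\
  forall (U : set S) (x : S), nbhs e U -> nbhs x [set m u x | u in U].
Definition is_open_right_unit {S : topologicalType} (m : S -> S -> S) (e : S) : Prop :=
  is_right_unit m e /\
  forall (U : set S) (x : S), nbhs e U -> nbhs x [set m x u | u in U].

(* Separation axioms (no T1 assumed). The unit interval is [0,1] in the
   Stdlib reals R (canonically a realType). *)
Definition ts_regular_space (S : topologicalType) : Prop :=
  forall (x : S) (O : set S), nbhs x O ->
    exists U : set S, nbhs x U /\ closure U `<=` O.

Definition ts_semiregular_space (S : topologicalType) : Prop :=
  forall (x : S) (O : set S), nbhs x O ->
    exists U : set S, nbhs x U /\ interior (closure U) `<=` O.

Definition ts_completely_regular_space (S : topologicalType) : Prop :=
  forall (x : S) (O : set S), nbhs x O ->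
    exists f : S -> Rdefinitions.R, continuous f /\ (forall y, 0 <= f y <= 1) /\
      f x = 0 /\ f @^-1` [set r | r < 1] `<=` O.

Definition ts_hausdorff_space (S : topologicalType) : Prop :=
  forall x y : S, x <> y ->
    exists U : set S, nbhs x U /\ ~ closure U y.

Definition ts_semi_hausdorff_space (S : topologicalType) : Prop :=
  forall x y : S, x <> y ->
    exists U : set S, nbhs x U /\ ~ interior (closure U) y.

Definition ts_functionally_hausdorff_space (S : topologicalType) : Prop :=
  forall x y : S, x <> y ->
    exists f : S -> Rdefinitions.R, continuous f /\ (forall z, 0 <= f z <= 1) /\ f x <> f y.

(** Write [L ≺ R] when [closure (V * L) ⊆ R] for some neighbourhood [V] of
    the open left unit [e].  For [y] in [closure A], [V * y] is a
    neighbourhood of [y] contained in [closure (V * A)], so [L ≺ R] forces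
    [closure L ⊆ interior R]; choosing [W] with [W * W ⊆ V] (continuity at
    [(e, e)]) and using associativity gives the interpolation
    [L ≺ closure (W * L) ≺ R].  These two properties are all that Urysohn's
    construction needs, so for every neighbourhood [U] of [x] a continuous
    function separates [x] from the complement of [closure U], which is
    what regularity and the Hausdorff property ask for.  The inclusion
    [closure Q ⊆ interior (closure U)] for a small neighbourhood [Q] of [x]
    likewise upgrades the semi-versions of both axioms, and a right unit is
    a left unit of the opposite multiplication. *)

From HB Require Import structures.
From mathcomp Require Import all_boot all_order all_algebra.
From mathcomp Require Import all_classical all_reals all_analysis.
From mathcomp Require Import Rstruct Rstruct_topology.
From mathcomp Require Import lra.

Set Implicit Arguments. Unset Strict Implicit. Unset Printing Implicit Defensive.
Import Order.TTheory GRing.Theory Num.Theory.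
Local Open Scope classical_set_scope.

Section interpolation_separator.
Local Open Scope relation_scope.
Context {T : topologicalType} (prec : set T -> set T -> Prop).
Hypothesis prec_interior : forall L R, prec L R -> closure L `<=` interior R.
Hypothesis prec_interpolate :
  forall L R, prec L R -> exists2 M, prec L M & prec M R.

Let prec_closure L R : prec L R -> closure L `<=` R.
Proof. by move=> /prec_interior LR z /LR /nbhs_singleton. Qed.

(* As in the library proof of Urysohn's lemma for normal spaces, with the
   normality of [T] replaced by the interpolation property of [prec]. *)
Let apx (LR : set T * set T) : set (T * T) :=
  (LR.2 `*` LR.2) `|` (~` closure LR.1 `*` ~` closure LR.1).

Let apx_base := [set apx LR | LR in [set LR | prec LR.1 LR.2]].

Let apx_base_refl E : apx_base E -> diagonal `<=` E.
Proof.
case=> -[L R] /prec_closure LR <- [? x /= /diagonalP ->].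
have [Rx|nRx] := pselect (R x); first by left.
by right; split => /LR.
Qed.

Let apx_base_inv E : apx_base E -> apx_base E^-1.
Proof.
case=> -[L R] ? <-; exists (L, R) => //.
by rewrite eqEsubset; split => -[x y] [] [? ?]; [left|right|left|right].
Qed.

Let apx_base_split E : apx_base E ->
  exists E1 E2, [/\ apx_base E1, apx_base E2 &
                    (E1 `&` E2) \; (E1 `&` E2) `<=` E].
Proof.
case=> -[L R] /= pLR <-; have [M pLM pMR] := prec_interpolate pLR.
have cLM := prec_closure pLM; have cMR := prec_closure pMR.
exists (apx (L, M)), (apx (M, R)); split; [by exists (L, M)|by exists (M, R)|].
case=> x z /= [y [+ +] []].
(do 4 (case; case=> /= ? ?)); try (by left); try (by right);
  match goal with nG : (~ closure ?S ?y), G : ?S ?y |- _ =>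
    by move/subset_closure: G
  end.
Qed.

Let apx_unif := smallest Filter apx_base.

Let apx_unif_filter : Filter apx_unif.
Proof. exact: smallest_filter_filter. Qed.

Let apx_unif_refl E : apx_unif E -> diagonal `<=` E.
Proof.
by move/(_ (globally diagonal)); apply; split;
  [exact: globally_filter|exact: apx_base_refl].
Qed.

Let apx_unif_inv E : apx_unif E -> apx_unif E^-1.
Proof.
move=> ufE F [/filter_inv FF urF]; have [] := ufE [set V^-1 | V in F].
  split => // K /apx_base_inv/urF /= ?; exists (K^-1)%classic => //.
  by rewrite set_prod_invK.
by move=> R FR <-; rewrite set_prod_invK.
Qed.

Let apx_unif_split_iter E n :
  filterI_iter apx_base n E -> exists2 K : set (T * T),
    filterI_iter apx_base n.+1 K & K \; K `<=` E.
Proof.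
elim: n E => [E [->|]|n IH E /= [E1 /IH [F1 F1n F1E1]] [E2 /IH [F2 F2n F2E2]] <-].
- exists setT => //; exists setT; first by left.
  by exists setT; rewrite ?setIT; first by left.
- move=> /[dup] /apx_base_split [E1 [E2] [? ? ? ?]]; exists (E1 `&` E2) => //.
  by (exists E1; first by right); exists E2; first by right.
exists (F1 `&` F2); first by exists F1 => //; exists F2.
move=> -[x z] [y /= [K1xy K2xy] [K1yz K2yz]]; split.
  by apply: F1E1; exists y.
by apply: F2E2; exists y.
Qed.

Let apx_unif_split E : apx_unif E -> exists2 K, apx_unif K & K \; K `<=` E.
Proof.
rewrite /apx_unif filterI_iterE; case=> G [n _] /apx_unif_split_iter [].
move=> K SnK KG GE; exists K; first by exists K => //; exists n.+1.
exact: subset_trans GE.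
Qed.

Let apx_unif_nbhs x : apx_unif `<=` [set E | nbhs x [set y | E (x, y)]].
Proof.
move=> E; rewrite /apx_unif filterI_iterE => -[K [i _] iK KE].
suff : nbhs x [set y | K (x, y)] by apply: filterS => y /KE.
elim: i K iK {E KE}; last first.
  by move=> ? IH ? [N] /IH ? [M] /IH ? <-; apply: filterI.
move=> K [->|[[P Q] /= pPQ <-]]; first exact: filterT.
have [cPx|nPx] := pselect (closure P x).
  apply: filterS (prec_interior pPQ cPx) => z Qz.
  by left; split => //; exact: prec_closure pPQ _ cPx.
have : nbhs x (~` closure P).
  by apply: open_nbhs_nbhs; split => //; exact/closed_openC/closed_closure.
by apply: filterS => z ?; right.
Qed.

Definition interpolation_uniformType : Type := T.

HB.instance Definition _ := Choice.on interpolation_uniformType.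

HB.instance Definition _ :=
  isUniform.Build interpolation_uniformType apx_unif_filter apx_unif_refl
    apx_unif_inv apx_unif_split.

Lemma interpolation_uniform_separator L R :
  prec L R -> uniform_separator L (~` R).
Proof.
move=> pLR; exists (Uniform.class interpolation_uniformType), (apx (L, R)).
split.
- by move=> ?; apply: sub_gen_smallest; exists (L, R).
- rewrite -subset0 => -[a b] [/= [La nRb] [[//]|[/= + _]]].
  by move/(_ (subset_closure La)).
- move=> x U [E uE] /(@filterS T); apply.
  have xE : nbhs (x : T) [set y : T | E (x, y)] := apx_unif_nbhs x uE.
  by apply: filterS xE => y /xsectionP.
Qed.

End interpolation_separator.

Section real_valued_separation.
Local Open Scope ring_scope.
Context {T : topologicalType}.
Implicit Type f : T -> Rdefinitions.R.

Lemma closure_preimage_subset (U : topologicalType) (g : T -> U) A :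
  continuous g -> closure (g @^-1` A) `<=` g @^-1` closure A.
Proof.
move=> cg; rewrite {1}closureE; apply: smallest_sub => [|x Agx].
  by move/continuous_closedP: cg; apply; exact: closed_closure.
exact/subset_closure.
Qed.

Lemma closure_preimage_ball_half f c r : continuous f -> (0 < r) ->
  closure (f @^-1` ball c (r / 2)) `<=` f @^-1` ball c r.
Proof.
move=> cf r0 x /(closure_preimage_subset cf).
exact: subset_closure_half.
Qed.

Lemma completely_regular_regular :
  ts_completely_regular_space T -> ts_regular_space T.
Proof.
move=> crT x O /crT [f [cf [_ [fx0 fO]]]].
exists (f @^-1` ball (0 : Rdefinitions.R) (1 / 2)); split.
  by apply: cf; rewrite fx0; apply: nbhsx_ballx; lra.
move=> y /(closure_preimage_ball_half cf ltr01) fy1; apply: fO.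
by move: fy1; rewrite /ball /= sub0r normrN => /ltr_normlW.
Qed.

Lemma functionally_hausdorff_hausdorff :
  ts_functionally_hausdorff_space T -> ts_hausdorff_space T.
Proof.
move=> fhT x y /fhT [f [cf [_ fxy]]].
have d0 : 0 < `|f x - f y| by rewrite normr_gt0 subr_eq0; apply/eqP.
exists (f @^-1` ball (f x) (`|f x - f y| / 2)); split.
  by apply: cf; apply: nbhsx_ballx; lra.
by move=> /(closure_preimage_ball_half cf d0); rewrite /ball /= ltxx.
Qed.

End real_valued_separation.

Lemma regular_semiregular (T : topologicalType) :
  ts_regular_space T -> ts_semiregular_space T.
Proof.
move=> rT x O /rT [U [xU UO]]; exists U; split => //.
exact: subset_trans (@interior_subset _ _) UO.
Qed.

Lemma hausdorff_semi_hausdorff (T : topologicalType) :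
  ts_hausdorff_space T -> ts_semi_hausdorff_space T.
Proof.
move=> hT x y /hT [U [xU nUy]]; exists U; split => //.
by move/interior_subset.
Qed.

Section open_left_unit.
Context {S : topologicalType} (m : S -> S -> S).
Implicit Types (V A L R U : set S).
Hypothesis mulA : forall x y z, m x (m y z) = m (m x y) z.
Hypothesis mul_cont : continuous (fun p : S * S => m p.1 p.2).
Variable e : S.
Hypothesis mul1 : forall x, m e x = x.
Hypothesis mul1_open :
  forall (U : set S) (x : S), nbhs e U -> nbhs x [set m u x | u in U].

Local Notation "V ** A" := [set m v a | v in V & a in A] (at level 40).

Lemma mul_nbhs_rect (a b : S) N : nbhs (m a b) N ->
  exists P Q, [/\ nbhs a P, nbhs b Q & P ** Q `<=` N].
Proof.
move=> /(@mul_cont (a, b)) [[P Q] /= [aP bQ] PQN]; exists P, Q; split => //.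
by move=> _ [p Pp [q Qq <-]]; exact: (PQN (p, q)).
Qed.

Lemma nbhs_unit_rect (x : S) U : nbhs x U ->
  exists P Q, [/\ nbhs e P, nbhs x Q & P ** Q `<=` U].
Proof. by rewrite -{1}(mul1 x); exact: mul_nbhs_rect. Qed.

Lemma mul_closure_subset V A : V ** closure A `<=` closure (V ** A).
Proof.
move=> _ [v Vv [y cAy <-]] N /mul_nbhs_rect [P [Q [vP yQ PQN]]].
have [a [Aa Qa]] := cAy Q yQ.
exists (m v a); split; first by exists v => //; exists a.
by apply: PQN; exists v; [exact: nbhs_singleton|exists a].
Qed.

Lemma closure_subset_interior_closure_mul V A :
  nbhs e V -> closure A `<=` interior (closure (V ** A)).
Proof.
move=> eV y cAy; apply: filterS (mul1_open y eV) => _ [v Vv <-].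
by apply: mul_closure_subset; exists v => //; exists y.
Qed.

Lemma nbhs_closure_subset_interior_closure (x : S) U : nbhs x U ->
  exists2 Q, nbhs x Q & closure Q `<=` interior (closure U).
Proof.
move=> /nbhs_unit_rect [P [Q [eP xQ PQU]]]; exists Q => //.
apply: subset_trans (closure_subset_interior_closure_mul (A := Q) eP) _.
exact/interiorS/closureS.
Qed.

Definition mul_prec (L R : set S) :=
  exists2 V, nbhs e V & closure (V ** L) `<=` R.

Lemma mul_prec_interior L R : mul_prec L R -> closure L `<=` interior R.
Proof.
case=> V eV VLR.
apply: subset_trans (closure_subset_interior_closure_mul (A := L) eV) _.
exact: interiorS.
Qed.

Lemma mul_prec_interpolate L R :
  mul_prec L R -> exists2 M, mul_prec L M & mul_prec M R.
Proof.
case=> V eV VLR; rewrite -(mul1 e) in eV.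
have [P [Q [eP eQ PQV]]] := mul_nbhs_rect eV.
pose W := P `&` Q; have eW : nbhs e W by exact: filterI.
exists (closure (W ** L)); first by exists W.
exists W => //; apply: subset_trans VLR.
apply: subset_trans (closureS (@mul_closure_subset W _)) _.
rewrite -(closure_id _).1; last exact: closed_closure.
apply: closureS => _ [w Ww [_ [w' Ww' [l Ll <-]] <-]].
exists (m w w'); last by exists l => //; rewrite mulA.
by apply: PQV; exists w; [case: Ww|exists w'; [case: Ww'|]].
Qed.

Lemma nbhs_separating_function (x : S) U : nbhs x U ->
  exists f : S -> Rdefinitions.R, [/\ continuous f,
    forall y, (0 <= f y <= 1)%R, f x = 0%R &
    forall y, ~ closure U y -> f y = 1%R].
Proof.
move=> /nbhs_unit_rect [P [Q [eP xQ PQU]]].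
have xU : mul_prec [set x] (closure U).
  exists P => //; apply: closureS; apply: subset_trans PQU.
  by apply: image2_subset => // _ ->; exact: nbhs_singleton.
have := interpolation_uniform_separator mul_prec_interior
  mul_prec_interpolate xU.
move=> /(@uniform_separatorP _ Rdefinitions.R) [f [cf f01 f0 f1]].
exists f; split => //.
- by move=> y; have := f01 (f y) (ex_intro2 _ _ y I erefl); rewrite /= in_itv.
- exact: f0 (ex_intro2 _ _ x erefl erefl).
- by move=> y nUy; exact: f1 (ex_intro2 _ _ y nUy erefl).
Qed.

Lemma semiregular_regular : ts_semiregular_space S -> ts_regular_space S.
Proof.
move=> srS x O /srS [U [xU UO]].
have [Q xQ QU] := nbhs_closure_subset_interior_closure xU.
by exists Q; split => //; exact: subset_trans UO.
Qed.

Lemma semi_hausdorff_hausdorff :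
  ts_semi_hausdorff_space S -> ts_hausdorff_space S.
Proof.
move=> shS x y /shS [U [xU nUy]].
have [Q xQ QU] := nbhs_closure_subset_interior_closure xU.
by exists Q; split => // /QU.
Qed.

Lemma regular_completely_regular :
  ts_regular_space S -> ts_completely_regular_space S.
Proof.
move=> rS x O /rS [U [xU UO]].
have [f [cf f01 fx0 f1]] := nbhs_separating_function xU.
exists f; do 3![split => //]; move=> y /= fy1.
apply: contrapT => /(subsetC UO) nUy.
by move: fy1; rewrite f1 // ltxx.
Qed.

Lemma hausdorff_functionally_hausdorff :
  ts_hausdorff_space S -> ts_functionally_hausdorff_space S.
Proof.
move=> hS x y /hS [U [xU nUy]].
have [f [cf f01 fx0 f1]] := nbhs_separating_function xU.
exists f; do !split => //; rewrite fx0 f1 //.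
by move=> /eqP; rewrite eq_sym oner_eq0.
Qed.

End open_left_unit.

Lemma open_right_unit_op (S : topologicalType) (m : S -> S -> S) e :
  is_topological_semigroup m -> is_open_right_unit m e ->
  is_topological_semigroup (fun x y => m y x) /\
  is_open_left_unit (fun x y => m y x) e.
Proof.
move=> [mA mC] [m1 m1_open]; do 2!split => //.
case=> a b N /(mul_nbhs_rect mC) [P [Q [aP bQ PQN]]].
by exists (Q, P) => // -[q p] [/= Qq Pp]; apply: PQN; exists p => //; exists q.
Qed.

Theorem corollary5p5 (S : topologicalType) (m : S -> S -> S) :
  is_topological_semigroup m ->
  (exists e : S, is_open_left_unit m e \/ is_open_right_unit m e) ->
  ((ts_completely_regular_space S <-> ts_regular_space S) /\
   (ts_regular_space S <-> ts_semiregular_space S)) /\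
  ((ts_functionally_hausdorff_space S <-> ts_hausdorff_space S) /\
   (ts_hausdorff_space S <-> ts_semi_hausdorff_space S)).
Proof.
move=> smS [e unit_e].
have [m' [[mA mC] [m1 m1_open]]] : exists m' : S -> S -> S,
    is_topological_semigroup m' /\ is_open_left_unit m' e.
  case: unit_e => [?|/(open_right_unit_op smS)]; first by exists m.
  by exists (fun x y => m y x).
split; split; split.
- exact: completely_regular_regular.
- exact: (regular_completely_regular mA mC m1 m1_open).
- exact: regular_semiregular.
- exact: (semiregular_regular mC m1 m1_open).
- exact: functionally_hausdorff_hausdorff.
- exact: (hausdorff_functionally_hausdorff mA mC m1 m1_open).
- exact: hausdorff_semi_hausdorff.
- exact: (semi_hausdorff_hausdorff mC m1 m1_open).
Qed.
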